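(* Assume (i) consistency: $Y=Y^a$ whenever $A=a$; (ii) treatment positivity: $\pi_a(\mathbf X)>0$ a.s. under $\mathbb P(\cdot\mid S=1)$ for all $a$; (iii) selection positivity: $\rho(\mathbf V)>0$ a.s.; (iv) there is a constant $\delta_1>0$ with $\big|\mathbb E[Y^a\mid \mathbf X,A=1,S=1]-\mathbb E[Y^a\mid\mathbf X,A=0,S=1]\big|\le\delta_1$ a.s. for all $a$; (v) there is a constant $\delta_2>0$ with $\big|\mathbb E[Y^a\mid \mathbf V,S=0]-\mathbb E[Y^a\mid \mathbf V,S=1]\big|\le\delta_2$ a.s. for all $a$. Then for each $a\in\{0,1\}$, $$\psi_a\in\Big[\mathbb E[\tau_a(\mathbf V)]-\delta_1\mathbb E[\mathbb P(A=1-a\mid \mathbf V,S=1)]-\delta_2\mathbb P(S=0),\ \mathbb E[\tau_a(\mathbf V)]+\delta_1\mathbb E[\mathbb P(A=1-a\mid \mathbf V,S=1)]+\delta_2\mathbb P(S=0)\Big],$$ $$\theta_a\in\Big[\mathbb E[\tau_a(\mathbf V)\mid S=0]-\delta_1\mathbb E[\mathbb P(A=1-a\mid\mathbf V,S=1)\mid S=0]-\delta_2,\ \mathbb E[\tau_a(\mathbf V)\mid S=0]+\delta_1\mathbb E[\mathbb P(A=1-a\mid\mathbf V,S=1)\mid S=0]+\delta_2\Big].$$ Consequently $$\psi_1-\psi_0\in\big[\mathbb E[\tau_1(\mathbf V)-\tau_0(\mathbf V)]-\delta_1-2\delta_2\mathbb P(S=0),\ \mathbb E[\tau_1(\mathbf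 V)-\tau_0(\mathbf V)]+\delta_1+2\delta_2\mathbb P(S=0)\big],$$ $$\theta_1-\theta_0\in\big[\mathbb E[\tau_1(\mathbf V)-\tau_0(\mathbf V)\mid S=0]-\delta_1-2\delta_2,\ \mathbb E[\tau_1(\mathbf V)-\tau_0(\mathbf V)\mid S=0]+\delta_1+2\delta_2\big].$$
   Context: Let $(\mathbf X,A,Y,S)$ be a random vector with covariates $\mathbf X\in\mathbb R^d$, binary treatment $A\in\{0,1\}$, real outcome $Y$, and source indicator $S\in\{0,1\}$ with $\mathbb P(S=0)>0$. $\mathbf V$ is a sub-vector of $\mathbf X$. $Y^a$ ($a\in\{0,1\}$) are integrable potential outcomes. Nuisance functions: $\pi_a(\mathbf x)=\mathbb P(A=a\mid \mathbf X=\mathbf x,S=1)$, $\rho(\mathbf v)=\mathbb P(S=1\mid \mathbf V=\mathbf v)$, $\mu_a(\mathbf x)=\mathbb E[Y\mid \mathbf X=\mathbf x,A=a,S=1]$, $\tau_a(\mathbf v)=\mathbb E[\mu_a(\mathbf X)\mid \mathbf V=\mathbf v,S=1]$. Targets: $\psi_a=\mathbb E[Y^a]$, $\theta_a=\mathbb E[Y^a\mid S=0]$. *)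

From HB Require Import structures.
From mathcomp Require Import all_boot all_order all_algebra.
From mathcomp Require Import all_classical all_reals all_analysis.
Set Implicit Arguments. Unset Strict Implicit. Unset Printing Implicit Defensive.
Import Order.TTheory GRing.Theory Num.Theory.
Local Open Scope classical_set_scope.
Local Open Scope ring_scope.

(* [cond_exp_on P E W Z g] : g is a version of the conditional expectation
   E[Z | W, E] (conditioning on the random element W within the event E),
   i.e. g is measurable, g(W) is integrable on E and for every measurable B,
   E[Z ; E /\ W in B] = E[g(W) ; E /\ W in B]. *)
Definition cond_exp_on {d dW : measure_display} {T : measurableType d}
  {TW : measurableType dW} {R : realType} (P : probability T R)
  (E : set T) (W : T -> TW) (Z : T -> R) (g : TW -> R) : Prop :=
  measurable_fun setT g /\
  P.-integrable E (EFin \o (g \o W)) /\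
  forall B : set TW, measurable B ->
    (\int[P]_(t in E `&` (W @^-1` B)) (Z t)%:E =
     \int[P]_(t in E `&` (W @^-1` B)) (g (W t))%:E)%E.

Definition cond_mean {d : measure_display} {T : measurableType d} {R : realType}
  (P : probability T R) (E : set T) (Z : T -> R) : \bar R :=
  ((\int[P]_(t in E) (Z t)%:E) * ((fine (P E))^-1)%:E)%E.

From HB Require Import structures.
From mathcomp Require Import all_boot all_order all_algebra.
From mathcomp Require Import all_classical all_reals all_analysis.
From mathcomp Require Import measurable_realfun lra ring.
Import Order.TTheory GRing.Theory Num.Theory.
Local Open Scope classical_set_scope.
Local Open Scope ring_scope.

(* E[Y^a] splits over the source indicator into E[n1(V); S = 1] + E[n0(V); S = 0],
   and assumption (v) trades n0 for n1 at cost δ2 per unit of P(S = 0).  Splitting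
   {S = 1} further by A, the {A = a} parts of the integrals of τ_a(V) and n1(V) agree
   (consistency and treatment positivity identify μ_a with m_{a,a}), so
   τ_a(V) - n1(V) is the conditional expectation given (V, S = 1) of
   1{A ≠ a}(m_{a,a}(X) - m_{a,1-a}(X)), whence |n1 - τ_a| ≤ δ1 q_a(V) with
   q_a(V) = P(A = 1 - a | V, S = 1).  Selection positivity carries such almost-sure
   facts from {S = 1} to the whole population, integrating gives the bounds, and for
   the contrasts q_1 + q_0 = 1 collapses δ1 (q_1 + q_0) to δ1. *)

Set Implicit Arguments.
Unset Strict Implicit.
Unset Printing Implicit Defensive.

Lemma measurable_preimage {d dW} {T : measurableType d} {TW : measurableType dW}
  (W : T -> TW) (B : set TW) :
  measurable_fun setT W -> measurable B -> measurable (W @^-1` B).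
Proof. by move=> mW mB; rewrite -[_ @^-1` _]setTI; exact: mW. Qed.

Section measurable_sets.
Context {d} {T : measurableType d} {R : realType}.

Lemma measurable_ler_set (f g : T -> R) :
  measurable_fun setT f -> measurable_fun setT g -> measurable [set x | f x <= g x].
Proof.
move=> mf mg; rewrite [X in measurable X](_ : _ = (fun x => f x <= g x) @^-1` [set true]).
  exact: measurable_preimage (measurable_fun_ler mf mg) _.
by apply/seteqP; split => x /=.
Qed.

Lemma measurable_eqr_set (f g : T -> R) :
  measurable_fun setT f -> measurable_fun setT g -> measurable [set x | f x = g x].
Proof.
move=> mf mg; rewrite [X in measurable X](_ : _ = (fun x => f x == g x) @^-1` [set true]).
  exact: measurable_preimage (measurable_fun_eqr mf mg) _.
by apply/seteqP; split => x /= /eqP.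
Qed.

Lemma measurable_bool_eq (A : T -> bool) b :
  measurable [set t | A t] -> measurable [set t | A t = b].
Proof.
case: b => // mA; rewrite [E in measurable E](_ : _ = ~` [set t | A t]).
  exact: measurableC.
by apply/seteqP; split => t /=; case: (A t).
Qed.

End measurable_sets.

Section integral_ae.
Context {d} {T : measurableType d} {R : realType} (mu : {measure set T -> \bar R}).
Implicit Types (D M F : set T) (f g h : T -> R).

Lemma EFin_Rintegral D f : measurable D -> mu.-integrable D (EFin \o f) ->
  (\int[mu]_(x in D) f x)%:E = (\int[mu]_(x in D) (f x)%:E)%E.
Proof. by move=> mD fi; rewrite /Rintegral fineK //; exact: integrable_fin_num. Qed.

Lemma integral_setI_setC D F (f : T -> \bar R) : measurable D -> measurable F ->
  measurable_fun D f ->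
  (\int[mu]_(x in D) f x = \int[mu]_(x in D `&` F) f x + \int[mu]_(x in D `&` ~` F) f x)%E.
Proof.
move=> mD mF mf.
have eD : D = (D `&` F) `|` (D `&` ~` F) by rewrite -setIUr setUCr setIT.
rewrite {1}eD integral_setU //; first exact: measurableI.
- by apply: measurableI => //; exact: measurableC.
- by rewrite -eD.
- by apply/disj_setPLR => t [_ Ft] [_]; apply.
Qed.

Lemma integrableD_EFin D f g : measurable D ->
  mu.-integrable D (EFin \o f) -> mu.-integrable D (EFin \o g) ->
  mu.-integrable D (EFin \o (fun x => f x + g x)).
Proof. by move=> mD fi gi; apply: eq_integrable (integrableD mD fi gi). Qed.

Lemma integrableB_EFin D f g : measurable D ->
  mu.-integrable D (EFin \o f) -> mu.-integrable D (EFin \o g) ->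
  mu.-integrable D (EFin \o (fun x => f x - g x)).
Proof. by move=> mD fi gi; apply: eq_integrable (integrableB mD fi gi). Qed.

Lemma integrableZl_EFin D f k : measurable D ->
  mu.-integrable D (EFin \o f) -> mu.-integrable D (EFin \o (fun x => k * f x)).
Proof. by move=> mD fi; apply: eq_integrable (integrableZl mD k fi). Qed.

Lemma Rintegral_setI_setC D F f : measurable D -> measurable F ->
  measurable_fun D f ->
  mu.-integrable (D `&` F) (EFin \o f) -> mu.-integrable (D `&` ~` F) (EFin \o f) ->
  \int[mu]_(x in D) f x = \int[mu]_(x in D `&` F) f x + \int[mu]_(x in D `&` ~` F) f x.
Proof.
move=> mD mF mf fi fci.
rewrite /Rintegral (integral_setI_setC mD mF); last exact/measurable_EFinP.
rewrite fineD //; apply: integrable_fin_num => //; apply: measurableI => //.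
exact: measurableC.
Qed.

Lemma Rintegral_ae_eq D f g : measurable D ->
  measurable_fun D f -> measurable_fun D g ->
  {ae mu, forall x, D x -> f x = g x} ->
  \int[mu]_(x in D) f x = \int[mu]_(x in D) g x.
Proof.
move=> mD mf mg fg; congr fine.
apply: ae_eq_integral => //; [exact/measurable_EFinP | exact/measurable_EFinP |].
by apply: filterS fg => t fgt Dt; rewrite /= fgt.
Qed.

Lemma le_Rintegral_ae D f g : measurable D ->
  mu.-integrable D (EFin \o f) -> mu.-integrable D (EFin \o g) ->
  {ae mu, forall x, D x -> f x <= g x} ->
  \int[mu]_(x in D) f x <= \int[mu]_(x in D) g x.
Proof.
move=> mD fi gi fg; rewrite -subr_ge0 -RintegralB //.
have mgf : measurable_fun D (fun x => g x - f x).
  by apply: measurable_funB; [case/integrableP: gi | case/integrableP: fi]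
    => /measurable_EFinP.
rewrite (@Rintegral_ae_eq _ _ (fun x => Num.max (g x - f x) 0)) //.
- by apply: Rintegral_ge0 => x _; rewrite le_max lexx orbT.
- exact: measurable_maxr.
- by apply: filterS fg => x fgx Dx; rewrite max_l // subr_ge0 fgx.
Qed.

Lemma ler_dist_Rintegral D f g h : measurable D ->
  mu.-integrable D (EFin \o f) -> mu.-integrable D (EFin \o g) ->
  mu.-integrable D (EFin \o h) ->
  {ae mu, forall x, D x -> `|f x - g x| <= h x} ->
  `|\int[mu]_(x in D) f x - \int[mu]_(x in D) g x| <= \int[mu]_(x in D) h x.
Proof.
move=> mD fi gi hi fgh.
have fgi : mu.-integrable D (EFin \o (fun x => f x - g x)) by exact: integrableB_EFin.
have gfi : mu.-integrable D (EFin \o (fun x => g x - f x)) by exact: integrableB_EFin.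
rewrite ler_norml lerNl opprB -!RintegralB //; apply/andP; split.
- apply: le_Rintegral_ae => //; apply: filterS fgh => x fghx Dx.
  by apply: le_trans (fghx Dx); rewrite distrC ler_norm.
- apply: le_Rintegral_ae => //; apply: filterS fgh => x fghx Dx.
  exact: le_trans (ler_norm _) (fghx Dx).
Qed.

Lemma le_integrable_ae D f g : measurable D -> measurable_fun D f ->
  mu.-integrable D (EFin \o g) ->
  {ae mu, forall x, D x -> `|f x| <= `|g x|} -> mu.-integrable D (EFin \o f).
Proof.
move=> mD mf gi fg; apply/integrableP; split; first exact/measurable_EFinP.
apply: le_lt_trans (integrableP _ _ _ gi).2.
apply: ae_ge0_le_integral => //.
- by apply: measurableT_comp => //; exact/measurable_EFinP.
- by apply: measurableT_comp => //; case/integrableP: gi.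
Qed.

Lemma measure0_Rintegral_gt0 M h : measurable M ->
  mu.-integrable M (EFin \o h) -> \int[mu]_(x in M) h x <= 0 ->
  {ae mu, forall x, M x -> 0 < h x} -> mu M = 0%E.
Proof.
move=> mM hi hle0 hgt0.
have mh : measurable_fun M (EFin \o h) by case/integrableP: hi.
have habs : (\int[mu]_(x in M) (h x)%:E = \int[mu]_(x in M) `|(h x)%:E|)%E.
  apply: ae_eq_integral => //; first exact: measurableT_comp.
  by apply: filterS hgt0 => x hx Mx; rewrite gee0_abs // lee_fin ltW // hx.
have /(ae_eq_integral_abs mu mM mh) h0 : (\int[mu]_(x in M) `|(h x)%:E| = 0)%E.
  apply/le_anti; rewrite integral_ge0 ?andbT //.
  by rewrite -habs -EFin_Rintegral // lee_fin.
have [N [mN N0 MN]] : {ae mu, forall x, ~ M x}.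
  apply: filterS2 hgt0 h0 => x hx hx0 Mx.
  by move: (hx Mx); rewrite (EFin_inj (hx0 Mx)) ltxx.
apply/eqP; rewrite -measure_le0 -N0 le_measure ?inE //.
by move=> x Mx; apply: MN => /=; apply.
Qed.

End integral_ae.

Section cond_exp_on_theory.
Context {d dW} {T : measurableType d} {TW : measurableType dW} {R : realType}.
Variables (P : probability T R) (W : T -> TW).
Hypothesis mW : measurable_fun setT W.
Implicit Types (E F G : set T) (f g h p : TW -> R).

Lemma cond_exp_on_Rintegral E (Z : T -> R) g B : cond_exp_on P E W Z g ->
  measurable B ->
  \int[P]_(t in E `&` W @^-1` B) Z t = \int[P]_(t in E `&` W @^-1` B) g (W t).
Proof. by move=> [_ [_ Zg]] mB; congr fine; exact: Zg. Qed.

Lemma cond_exp_on_integral E (Z : T -> R) g : cond_exp_on P E W Z g ->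
  (\int[P]_(t in E) (Z t)%:E = \int[P]_(t in E) (g (W t))%:E)%E.
Proof.
by move=> [_ [_ Zg]]; have := Zg setT measurableT; rewrite preimage_setT setIT.
Qed.

Let measurable_setI_preimage E B : measurable E -> measurable B ->
  measurable (E `&` W @^-1` B).
Proof. by move=> mE mB; apply: measurableI => //; exact: measurable_preimage. Qed.

Let integrable_setI_preimage E B (Z : T -> \bar R) : measurable E -> measurable B ->
  P.-integrable E Z -> P.-integrable (E `&` W @^-1` B) Z.
Proof.
move=> mE mB; apply: integrableS => //; exact: measurable_setI_preimage.
Qed.

Lemma ae_le_of_Rintegral_preimage_le E f g : measurable E ->
  measurable_fun setT f -> measurable_fun setT g ->
  P.-integrable E (EFin \o (f \o W)) -> P.-integrable E (EFin \o (g \o W)) ->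
  (forall B, measurable B ->
    \int[P]_(t in E `&` W @^-1` B) f (W t) <= \int[P]_(t in E `&` W @^-1` B) g (W t)) ->
  {ae P, forall t, E t -> f (W t) <= g (W t)}.
Proof.
move=> mE mf mg fi gi fg.
have mB : measurable (~` [set x | f x <= g x]).
  by apply: measurableC; exact: measurable_ler_set.
pose M := E `&` W @^-1` (~` [set x | f x <= g x]).
have mM : measurable M by exact: measurable_setI_preimage.
have PM0 : P M = 0%E.
  apply: (@measure0_Rintegral_gt0 _ _ _ P M (fun t => f (W t) - g (W t))) => //.
  - by apply: integrableB_EFin => //; exact: integrable_setI_preimage.
  - rewrite RintegralB ?subr_le0 ?fg //; exact: integrable_setI_preimage.
  - by apply: aeW => t [_ /=]; rewrite subr_gt0 ltNge => /negP.
by exists M; split => // t /= /not_implyP[Et nfg]; split.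
Qed.

Lemma ae_eq_of_Rintegral_preimage_eq E f g : measurable E ->
  measurable_fun setT f -> measurable_fun setT g ->
  P.-integrable E (EFin \o (f \o W)) -> P.-integrable E (EFin \o (g \o W)) ->
  (forall B, measurable B ->
    \int[P]_(t in E `&` W @^-1` B) f (W t) = \int[P]_(t in E `&` W @^-1` B) g (W t)) ->
  {ae P, forall t, E t -> f (W t) = g (W t)}.
Proof.
move=> mE mf mg fi gi fg.
have le_fg := ae_le_of_Rintegral_preimage_le mE mf mg fi gi
  (fun B mB => ltac:(by rewrite fg)).
have le_gf := ae_le_of_Rintegral_preimage_le mE mg mf gi fi
  (fun B mB => ltac:(by rewrite fg)).
by apply: filterS2 le_fg le_gf => t fgt gft Et; apply/le_anti; rewrite fgt ?gft.
Qed.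

Lemma ae_dist_le_of_Rintegral_preimage E f g h : measurable E ->
  measurable_fun setT f -> measurable_fun setT g -> measurable_fun setT h ->
  P.-integrable E (EFin \o (f \o W)) -> P.-integrable E (EFin \o (g \o W)) ->
  P.-integrable E (EFin \o (h \o W)) ->
  (forall B, measurable B ->
    `|\int[P]_(t in E `&` W @^-1` B) f (W t) - \int[P]_(t in E `&` W @^-1` B) g (W t)|
      <= \int[P]_(t in E `&` W @^-1` B) h (W t)) ->
  {ae P, forall t, E t -> `|f (W t) - g (W t)| <= h (W t)}.
Proof.
move=> mE mf mg mh fi gi hi fgh.
have RintB B f1 f2 : measurable B ->
    P.-integrable E (EFin \o (f1 \o W)) -> P.-integrable E (EFin \o (f2 \o W)) ->
    \int[P]_(t in E `&` W @^-1` B) (f1 (W t) - f2 (W t)) =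
    \int[P]_(t in E `&` W @^-1` B) f1 (W t) - \int[P]_(t in E `&` W @^-1` B) f2 (W t).
  by move=> mB f1i f2i; apply: RintegralB;
    [exact: measurable_setI_preimage | exact: integrable_setI_preimage ..].
have le_fg := @ae_le_of_Rintegral_preimage_le E (fun x => f x - g x) h mE
  (measurable_funB mf mg) mh (integrableB_EFin mE fi gi) hi
  (fun B mB => ltac:(by rewrite RintB //; move: (fgh B mB); rewrite ler_norml => /andP[])).
have le_gf := @ae_le_of_Rintegral_preimage_le E (fun x => g x - f x) h mE
  (measurable_funB mg mf) mh (integrableB_EFin mE gi fi) hi
  (fun B mB => ltac:(by rewrite RintB //; move: (fgh B mB);
     rewrite ler_norml lerNl opprB => /andP[])).
apply: filterS2 le_fg le_gf => t fgt gft Et.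
by rewrite ler_norml lerNl opprB fgt ?gft.
Qed.

Lemma cond_exp_on_ae_eq E (Z Z' : T -> R) g : measurable E ->
  measurable_fun setT Z -> measurable_fun setT Z' ->
  {ae P, forall t, E t -> Z t = Z' t} ->
  cond_exp_on P E W Z g -> cond_exp_on P E W Z' g.
Proof.
move=> mE mZ mZ' ZZ' [mg [gi Zg]]; split=> //; split=> // B mB.
rewrite -Zg //; apply: ae_eq_integral.
- exact: measurable_setI_preimage.
- by apply/measurable_EFinP; exact: measurable_funTS.
- by apply/measurable_EFinP; exact: measurable_funTS.
- by apply: filterS ZZ' => t ZZt [Et _]; rewrite /= ZZt.
Qed.

Lemma cond_prob_ge0 E F p : measurable E ->
  cond_exp_on P E W (\1_F) p -> {ae P, forall t, E t -> 0 <= p (W t)}.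
Proof.
move=> mE pF; case: (pF) => mp [pi _].
apply: (@ae_le_of_Rintegral_preimage_le E (cst 0) p) => //.
  exact: finite_measure_integrable_cst.
move=> B mB; rewrite -(cond_exp_on_Rintegral pF mB) /= Rintegral_cst ?mul0r //.
  by apply: Rintegral_ge0 => t _; rewrite indicE ler0n.
exact: measurable_setI_preimage.
Qed.

Lemma cond_prob_compl E F G p q : measurable E -> measurable F -> measurable G ->
  (forall t, F t \/ G t) -> (forall t, F t -> ~ G t) ->
  cond_exp_on P E W (\1_F) p -> cond_exp_on P E W (\1_G) q ->
  {ae P, forall t, E t -> p (W t) + q (W t) = 1}.
Proof.
move=> mE mF mG FG disjFG pF qG; case: (pF) => mp [pi _]; case: (qG) => mq [qi _].
apply: (@ae_eq_of_Rintegral_preimage_eq E (fun x => p x + q x) (cst 1)) => //.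
- exact: measurable_funD.
- exact: integrableD_EFin.
- exact: finite_measure_integrable_cst.
move=> B mB; have mEB := measurable_setI_preimage mE mB.
have indic_i H : measurable H -> P.-integrable (E `&` W @^-1` B) (EFin \o \1_H).
  by move=> mH; apply: integrableS (integrable_indic _ mH).
rewrite RintegralD; [|exact: mEB|exact: integrable_setI_preimage..].
rewrite -(cond_exp_on_Rintegral pF mB) -(cond_exp_on_Rintegral qG mB).
rewrite -RintegralD ?indic_i //; apply: eq_Rintegral => t _ /=.
rewrite !indicE; case: (FG t) => [Ft|Gt].
  by rewrite (mem_set Ft) (memNset (disjFG t Ft)) addr0.
by rewrite (mem_set Gt) memNset ?add0r // => Ft; exact: disjFG Ft Gt.
Qed.

Lemma ae_of_cond_prob_gt0 E F p (Q : set TW) :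
  measurable E -> measurable F -> measurable Q ->
  cond_exp_on P E W (\1_F) p -> {ae P, forall t, E t -> 0 < p (W t)} ->
  {ae P, forall t, E t -> F t -> Q (W t)} -> {ae P, forall t, E t -> Q (W t)}.
Proof.
move=> mE mF mQ pF p_gt0 [N [mN PN0 QN]]; case: (pF) => mp [pi _].
pose M := E `&` W @^-1` (~` Q).
have mM : measurable M by apply: measurable_setI_preimage => //; exact: measurableC.
have PFM0 : P (F `&` M) = 0%E.
  apply/eqP; rewrite -measure_le0 -PN0 le_measure ?inE //; first exact: measurableI.
  by move=> t [Ft [Et nQ]]; apply: QN => /= /(_ Et Ft).
have PM0 : P M = 0%E.
  apply: (@measure0_Rintegral_gt0 _ _ _ P M (p \o W)) => //.
  - exact: integrable_setI_preimage mE (measurableC mQ) pi.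
  - rewrite -(cond_exp_on_Rintegral pF) /Rintegral; last exact: measurableC.
    by rewrite integral_indic // [X in fine X](_ : _ = 0%E) //; exact: PFM0.
  - by apply: filterS p_gt0 => t pt [Et _]; exact: pt.
by exists M; split => // t /= /not_implyP[Et nQ].
Qed.

End cond_exp_on_theory.

Section treatment_arm.
Context {d dX dV} {T : measurableType d} {TX : measurableType dX}
  {TV : measurableType dV} {R : realType}.
Variables (P : probability T R) (X : T -> TX) (proj : TX -> TV) (A S : T -> bool).
Variable a : bool.
Hypotheses (mX : measurable_fun setT X) (mproj : measurable_fun setT proj).
Hypotheses (mA : measurable [set t | A t]) (mS : measurable [set t | S t]).

Let mAeq b : measurable [set t | A t = b] := measurable_bool_eq b mA.

Let mAS b : measurable [set t | A t = b /\ S t].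
Proof. exact: measurableI (mAeq b) mS. Qed.

Lemma cond_exp_consistency (Y Ya : T -> R) (pia mua maa : TX -> R) :
  measurable_fun setT Y -> measurable_fun setT Ya ->
  cond_exp_on P [set t | S t] X (\1_[set t | A t = a]) pia ->
  cond_exp_on P [set t | A t = a /\ S t] X Y mua ->
  cond_exp_on P [set t | A t = a /\ S t] X Ya maa ->
  {ae P, forall t, A t = a -> Y t = Ya t} ->
  {ae P, forall t, S t -> 0 < pia (X t)} ->
  {ae P, forall t, S t -> mua (X t) = maa (X t)}.
Proof.
move=> mY mYa hpi hmu hma cons pia_gt0.
case: (hmu) => mmu [imu _]; case: (hma) => mma [ima _].
have mu_ma : {ae P, forall t, A t = a /\ S t -> mua (X t) = maa (X t)}.
  apply: (ae_eq_of_Rintegral_preimage_eq mX (mAS a) mmu mma imu ima) => B mB.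
  rewrite -(cond_exp_on_Rintegral hmu mB) -(cond_exp_on_Rintegral hma mB).
  apply: Rintegral_ae_eq; [|exact: measurable_funTS..|].
    by apply: measurableI (mAS a) _; exact: measurable_preimage.
  by apply: filterS cons => t Yt [[At _] _]; exact: Yt.
apply: (ae_of_cond_prob_gt0 mX mS (mAeq a) (measurable_eqr_set mmu mma) hpi pia_gt0).
by apply: filterS mu_ma => t mu_t St At; exact: mu_t.
Qed.

Let V t := proj (X t).

Let mV : measurable_fun setT V.
Proof. exact: measurableT_comp. Qed.

Variable rho : TV -> R.
Hypothesis hrho : cond_exp_on P setT V (\1_[set t | S t]) rho.
Hypothesis rho_gt0 : {ae P, forall t, 0 < rho (proj (X t))}.

Let ae_on_support (Q : set TV) : measurable Q ->
  {ae P, forall t, S t -> Q (V t)} -> {ae P, forall t, Q (V t)}.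
Proof.
move=> mQ QS; apply: filterS (ae_of_cond_prob_gt0 mV measurableT mS mQ hrho _ _).
- by move=> t; apply.
- by apply: filterS rho_gt0 => t ? _.
- by apply: filterS QS => t ? _.
Qed.

Variables (qa qb : TV -> R).
Hypothesis hq : cond_exp_on P [set t | S t] V (\1_[set t | A t = ~~ a]) qa.
Hypothesis hqb : cond_exp_on P [set t | S t] V (\1_[set t | A t = a]) qb.

Lemma cond_prob_ge0_support : {ae P, forall t, 0 <= qa (proj (X t))}.
Proof.
case: hq => mq _; apply: (ae_on_support (Q := [set v | 0 <= qa v])).
  exact: measurable_ler_set (measurable_cst _) mq.
by apply: filterS (cond_prob_ge0 mV mS hq) => t; apply.
Qed.

Lemma cond_prob_compl_support :
  {ae P, forall t, qa (proj (X t)) + qb (proj (X t)) = 1}.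
Proof.
case: hq => mqa _; case: hqb => mqb _.
apply: (ae_on_support (Q := [set v | qa v + qb v = 1])).
  exact: measurable_eqr_set (measurable_funD mqa mqb) (measurable_cst _).
have A_cover t : A t = ~~ a \/ A t = a by case: (A t); case: a; auto.
have A_disj t : A t = ~~ a -> A t <> a by move=> ->; case: (a).
apply: filterS (cond_prob_compl mV mS (mAeq _) (mAeq _) A_cover A_disj hq hqb).
by move=> t; apply.
Qed.

Variables (Y Ya : T -> R) (pia mua maa mab : TX -> R) (taua n1a : TV -> R) (d1 : R).
Hypotheses (mY : measurable_fun setT Y) (mYa : measurable_fun setT Ya).
Hypothesis iYa : P.-integrable setT (EFin \o Ya).
Hypothesis hpi : cond_exp_on P [set t | S t] X (\1_[set t | A t = a]) pia.
Hypothesis hmu : cond_exp_on P [set t | A t = a /\ S t] X Y mua.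
Hypothesis htau : cond_exp_on P [set t | S t] V (fun t => mua (X t)) taua.
Hypothesis hmaa : cond_exp_on P [set t | A t = a /\ S t] X Ya maa.
Hypothesis hmab : cond_exp_on P [set t | A t = ~~ a /\ S t] X Ya mab.
Hypothesis hn1 : cond_exp_on P [set t | S t] V Ya n1a.
Hypothesis consistency : {ae P, forall t, A t = a -> Y t = Ya t}.
Hypothesis pia_gt0 : {ae P, forall t, S t -> 0 < pia (X t)}.
Hypothesis hd1 : {ae P, forall t, S t -> `|maa (X t) - mab (X t)| <= d1}.

Let htau_maa : cond_exp_on P [set t | S t] V (fun t => maa (X t)) taua.
Proof.
case: hmu => mmu _; case: hmaa => mmaa _.
apply: cond_exp_on_ae_eq htau => //; try exact: measurableT_comp.
exact: cond_exp_consistency hpi hmu hmaa consistency pia_gt0.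
Qed.

Let mSV B : measurable B -> measurable ([set t | S t] `&` V @^-1` B).
Proof. by move=> mB; apply: measurableI mS _; exact: measurable_preimage. Qed.

Let mAX b B : measurable B ->
  measurable ([set t | A t = b /\ S t] `&` X @^-1` (proj @^-1` B)).
Proof.
move=> mB; apply: measurableI (mAS _) _.
by apply: measurable_preimage mX _; exact: measurable_preimage.
Qed.

Let maa_integrable_compl : P.-integrable [set t | A t = ~~ a /\ S t] (EFin \o (maa \o X)).
Proof.
case: hmab => mmab [imab _]; case: hmaa => mmaa _.
apply: (le_integrable_ae (g := fun t => `|mab (X t)| + d1)) => //.
- by apply: measurable_funTS; exact: measurableT_comp.
- by apply: integrableD_EFin => //; [exact: integrable_norm | exact: finite_measure_integrable_cst].
apply: filterS hd1 => t hd1t [_ St]; have {}hd1t := hd1t St.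
rewrite /= [E in _ <= E]ger0_norm; last by rewrite addr_ge0 // (le_trans _ hd1t).
rewrite -[maa (X t)](subrK (mab (X t))); apply: le_trans (ler_normD _ _) _.
by rewrite addrC lerD2l.
Qed.

Let Rintegral_split_treatment B (f : T -> R) : measurable B -> measurable_fun setT f ->
  P.-integrable [set t | A t = a /\ S t] (EFin \o f) ->
  P.-integrable [set t | A t = ~~ a /\ S t] (EFin \o f) ->
  \int[P]_(t in [set t | S t] `&` V @^-1` B) f t =
  \int[P]_(t in [set t | A t = a /\ S t] `&` X @^-1` (proj @^-1` B)) f t +
  \int[P]_(t in [set t | A t = ~~ a /\ S t] `&` X @^-1` (proj @^-1` B)) f t.
Proof.
move=> mB mf fa fna.
have eA : [set t | S t] `&` V @^-1` B `&` [set t | A t = a] =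
    [set t | A t = a /\ S t] `&` X @^-1` (proj @^-1` B).
  by apply/seteqP; split => t /=; rewrite /V /=; tauto.
have eNA : [set t | S t] `&` V @^-1` B `&` ~` [set t | A t = a] =
    [set t | A t = ~~ a /\ S t] `&` X @^-1` (proj @^-1` B).
  apply/seteqP; split => t /=; rewrite /V /=.
    by move=> [[St Bt] Aa]; split => //; split => //; case: (A t) Aa; case: (a).
  by move=> [[Aa St] Bt]; split => //; rewrite Aa; case: (a).
rewrite (Rintegral_setI_setC (mSV mB) (mAeq a)) ?eA ?eNA //.
- exact: measurable_funTS.
- by apply: integrableS fa; [exact: mAS | exact: mAX | exact: subIsetl].
- by apply: integrableS fna; [exact: mAS | exact: mAX | exact: subIsetl].
Qed.

(* On {A = a} both integrals equal that of Y^a; only the {A = ~~ a} parts differ. *)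
Let Rintegral_tau_sub_n1 B : measurable B ->
  \int[P]_(t in [set t | S t] `&` V @^-1` B) taua (V t) -
  \int[P]_(t in [set t | S t] `&` V @^-1` B) n1a (V t) =
  \int[P]_(t in [set t | A t = ~~ a /\ S t] `&` X @^-1` (proj @^-1` B)) maa (X t) -
  \int[P]_(t in [set t | A t = ~~ a /\ S t] `&` X @^-1` (proj @^-1` B)) mab (X t).
Proof.
move=> mB; have mpB := measurable_preimage mproj mB.
case: (hmaa) => mmaa [imaa _].
have iYaS b : P.-integrable [set t | A t = b /\ S t] (EFin \o Ya).
  exact: integrableS iYa.
rewrite -(cond_exp_on_Rintegral htau_maa mB) -(cond_exp_on_Rintegral hn1 mB).
rewrite !Rintegral_split_treatment //; last exact: measurableT_comp.
rewrite -(cond_exp_on_Rintegral hmaa mpB) (cond_exp_on_Rintegral hmab mpB).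
by rewrite opprD addrACA subrr add0r.
Qed.

Let Rintegral_q B : measurable B ->
  \int[P]_(t in [set t | S t] `&` V @^-1` B) qa (V t) =
  fine (P ([set t | A t = ~~ a /\ S t] `&` X @^-1` (proj @^-1` B))).
Proof.
move=> mB; rewrite -(cond_exp_on_Rintegral hq mB) /Rintegral integral_indic //; last exact: mSV.
by congr (fine (P _)); apply/seteqP; split => t /=; rewrite /V /=; tauto.
Qed.

Let n1_tau_dist_le_S :
  {ae P, forall t, S t -> `|n1a (V t) - taua (V t)| <= d1 * qa (V t)}.
Proof.
case: (hn1) => mn1 [in1 _]; case: (htau) => mtau [itau _]; case: (hq) => mq [iq _].
case: (hmab) => _ [imab _].
apply: (ae_dist_le_of_Rintegral_preimage mV mS mn1 mtau
  (measurable_funM (measurable_cst d1) mq) in1 itau (integrableZl_EFin _ mS iq)).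
move=> B mB; rewrite distrC Rintegral_tau_sub_n1 // RintegralZl ?Rintegral_q //;
  [|exact: mSV | exact: integrableS mS (mSV mB) (@subIsetl _ _ _) iq].
rewrite -Rintegral_cst; last exact: mAX.
apply: ler_dist_Rintegral; first exact: mAX.
- by apply: integrableS maa_integrable_compl; [exact: mAS | exact: mAX | exact: subIsetl].
- by apply: integrableS imab; [exact: mAS | exact: mAX | exact: subIsetl].
- exact: finite_measure_integrable_cst (mAX _ mB).
by apply: filterS hd1 => t hd1t [[_ St] _]; exact: hd1t.
Qed.

Lemma n1_tau_dist_le : {ae P, forall t,
  `|n1a (proj (X t)) - taua (proj (X t))| <= d1 * qa (proj (X t))}.
Proof.
case: (hn1) => mn1 _; case: (htau) => mtau _; case: (hq) => mq _.
apply: (ae_on_support (Q := [set v | `|n1a v - taua v| <= d1 * qa v])).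
  apply: measurable_ler_set; last exact: measurable_funM (measurable_cst _) mq.
  by apply: measurableT_comp; last exact: measurable_funB mn1 mtau.
by apply: filterS n1_tau_dist_le_S => t; apply.
Qed.

End treatment_arm.

Lemma ler_dist_div {R : realFieldType} (x y e p : R) : 0 < p ->
  `|x - y| <= e * p -> y / p - e <= x / p <= y / p + e.
Proof.
move=> p_gt0 xye.
have : `|x / p - y / p| <= e.
  by rewrite -mulrBl normrM normfV (gtr0_norm p_gt0) ler_pdivrMr.
by rewrite ler_norml => /andP[? ?]; apply/andP; split; lra.
Qed.

(* Here y a, n1 a, n0 a, g a and w a stand for Y^a, E[Y^a | V, S = 1](V),
   E[Y^a | V, S = 0](V), τ_a(V) and q_a(V). *)
Section selection_bounds.
Context {d} {T : measurableType d} {R : realType} (P : probability T R).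
Variables (S : T -> bool) (y n1 n0 g w : bool -> T -> R) (d1 d2 : R).
Local Notation S1 := [set t | S t].
Local Notation S0 := [set t | ~~ S t].
Hypotheses (mS : measurable S1) (PS0_gt0 : (0 < P S0)%E).
Hypotheses (d1_ge0 : 0 <= d1) (d2_ge0 : 0 <= d2).
Hypotheses (my : forall a, measurable_fun setT (y a))
  (mg : forall a, measurable_fun setT (g a)) (mw : forall a, measurable_fun setT (w a)).
Hypotheses (in1 : forall a, P.-integrable S1 (EFin \o n1 a))
  (in0 : forall a, P.-integrable S0 (EFin \o n0 a))
  (ig : forall a, P.-integrable S1 (EFin \o g a)).
Hypotheses
  (y_n1 : forall a, (\int[P]_(t in S1) (y a t)%:E = \int[P]_(t in S1) (n1 a t)%:E)%E)
  (y_n0 : forall a, (\int[P]_(t in S0) (y a t)%:E = \int[P]_(t in S0) (n0 a t)%:E)%E).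
Hypotheses (n0_n1 : forall a, {ae P, forall t, `|n0 a t - n1 a t| <= d2})
  (n1_g : forall a, {ae P, forall t, `|n1 a t - g a t| <= d1 * w a t})
  (w_ge0 : forall a, {ae P, forall t, 0 <= w a t})
  (w_sum : forall a, {ae P, forall t, w a t + w (~~ a) t = 1}).

Let setC_S1 : ~` S1 = S0.
Proof. by apply/seteqP; split => t /=; case: (S t). Qed.

Let mS0 : measurable S0.
Proof. by rewrite -setC_S1; exact: measurableC. Qed.

Let p0 := fine (P S0).

Let PS0E : P S0 = p0%:E.
Proof. by rewrite fineK // fin_num_measure. Qed.

Let p0_gt0 : 0 < p0.
Proof. by rewrite -lte_fin -PS0E. Qed.

Let PS1_add_p0 : fine (P S1) + p0 = 1.
Proof.
apply: EFin_inj; rewrite EFinD fineK ?fin_num_measure // -PS0E -measureU //.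
  by rewrite -setC_S1 setUCr; exact: probability_setT.
by rewrite -setC_S1 setICr.
Qed.

Let integral_split (f : T -> \bar R) : measurable_fun setT f ->
  (\int[P]_t f t = \int[P]_(t in S1) f t + \int[P]_(t in S0) f t)%E.
Proof. by move=> mf; rewrite (integral_setI_setC _ measurableT mS) // !setTI setC_S1. Qed.

Let w_le1 a : {ae P, forall t, w a t <= 1}.
Proof. by apply: filterS2 (w_sum a) (w_ge0 (~~ a)) => t <- ?; rewrite lerDl. Qed.

Let iw a D : measurable D -> P.-integrable D (EFin \o w a).
Proof.
move=> mD; apply: (le_integrable_ae (g := cst 1)) => //.
- exact: measurable_funTS.
- exact: finite_measure_integrable_cst.
by apply: filterS2 (w_ge0 a) (w_le1 a) => t ? ? _; rewrite normr1 ger0_norm.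
Qed.

Let n1_g_d1 a : {ae P, forall t, `|n1 a t - g a t| <= d1}.
Proof.
apply: filterS2 (n1_g a) (w_le1 a) => t /le_trans + w1; apply.
by rewrite -[leRHS]mulr1 ler_wpM2l.
Qed.

Let ig0 a : P.-integrable S0 (EFin \o g a).
Proof.
apply: (le_integrable_ae (g := fun t => `|n0 a t| + (d2 + d1))) => //.
- exact: measurable_funTS.
- by apply: integrableD_EFin => //;
    [exact: integrable_norm | exact: finite_measure_integrable_cst].
apply: filterS2 (n0_n1 a) (n1_g_d1 a) => t n0n1 n1g _.
rewrite [leRHS]ger0_norm ?addr_ge0 // addrA.
rewrite (_ : g a t = n0 a t - (n0 a t - n1 a t) - (n1 a t - g a t)); last by ring.
by apply: le_trans (ler_normB _ _) _; apply: lerD => //;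
  apply: le_trans (ler_normB _ _) _; rewrite lerD2l.
Qed.

Let bound_S1 a : `|\int[P]_(t in S1) n1 a t - \int[P]_(t in S1) g a t|
  <= d1 * \int[P]_(t in S1) w a t.
Proof.
rewrite -RintegralZl ?iw //; apply: ler_dist_Rintegral => //.
  exact: integrableZl_EFin (iw _ mS).
by apply: filterS (n1_g a) => t + _.
Qed.

Let bound_S0 a : `|\int[P]_(t in S0) n0 a t - \int[P]_(t in S0) g a t|
  <= d2 * p0 + d1 * \int[P]_(t in S0) w a t.
Proof.
rewrite -RintegralZl ?iw // -[d2 * p0]Rintegral_cst // -RintegralD //; last 2 first.
- exact: finite_measure_integrable_cst.
- exact: integrableZl_EFin (iw _ mS0).
apply: ler_dist_Rintegral => //.
  apply: integrableD_EFin => //; first exact: finite_measure_integrable_cst.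
  exact: integrableZl_EFin (iw _ mS0).
apply: filterS2 (n0_n1 a) (n1_g a) => t n0n1 n1g _.
rewrite (_ : n0 a t - g a t = (n0 a t - n1 a t) + (n1 a t - g a t)); last by ring.
by apply: le_trans (ler_normD _ _) _; exact: lerD.
Qed.

Let Rintegral_w_sum a D : measurable D ->
  \int[P]_(t in D) w a t + \int[P]_(t in D) w (~~ a) t = fine (P D).
Proof.
move=> mD; rewrite -RintegralD ?iw // (Rintegral_ae_eq (g := cst 1)) //.
- by rewrite Rintegral_cst // mul1r.
- by apply: measurable_funTS; exact: measurable_funD.
- by apply: filterS (w_sum a) => t + _.
Qed.

Let integral_EFin_split (f : T -> R) : measurable_fun setT f ->
  P.-integrable S1 (EFin \o f) -> P.-integrable S0 (EFin \o f) ->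
  (\int[P]_t (f t)%:E = (\int[P]_(t in S1) f t + \int[P]_(t in S0) f t)%:E)%E.
Proof.
move=> mf i1 i0; rewrite integral_split; last exact/measurable_EFinP.
by rewrite -!EFin_Rintegral.
Qed.

Let integral_y a :
  (\int[P]_t (y a t)%:E = (\int[P]_(t in S1) n1 a t + \int[P]_(t in S0) n0 a t)%:E)%E.
Proof.
rewrite integral_split; last exact/measurable_EFinP.
by rewrite y_n1 y_n0 -!EFin_Rintegral.
Qed.

Let cond_mean_S0 (f : T -> R) : P.-integrable S0 (EFin \o f) ->
  cond_mean P S0 f = (\int[P]_(t in S0) f t / p0)%:E.
Proof. by move=> fi; rewrite /cond_mean -EFin_Rintegral. Qed.

Let cond_mean_y a : cond_mean P S0 (y a) = (\int[P]_(t in S0) n0 a t / p0)%:E.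
Proof. by rewrite /cond_mean y_n0 -EFin_Rintegral. Qed.

Lemma selection_bounds :
  (forall a : bool,
     (\int[P]_t (g a t)%:E - d1%:E * \int[P]_t (w a t)%:E - d2%:E * P S0
        <= \int[P]_t (y a t)%:E <=
      \int[P]_t (g a t)%:E + d1%:E * \int[P]_t (w a t)%:E + d2%:E * P S0)%E /\
     (cond_mean P S0 (g a) - d1%:E * cond_mean P S0 (w a) - d2%:E
        <= cond_mean P S0 (y a) <=
      cond_mean P S0 (g a) + d1%:E * cond_mean P S0 (w a) + d2%:E)%E) /\
  (\int[P]_t (g true t - g false t)%:E - d1%:E - (2 * d2)%:E * P S0
     <= \int[P]_t (y true t)%:E - \int[P]_t (y false t)%:E <=
   \int[P]_t (g true t - g false t)%:E + d1%:E + (2 * d2)%:E * P S0)%E /\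
  (cond_mean P S0 (fun t => (g true t - g false t)%R) - d1%:E - (2 * d2)%:E
     <= cond_mean P S0 (y true) - cond_mean P S0 (y false) <=
   cond_mean P S0 (fun t => (g true t - g false t)%R) + d1%:E + (2 * d2)%:E)%E.
Proof.
have gE a := integral_EFin_split (mg a) (ig a) (ig0 a).
have wE a := integral_EFin_split (mw a) (iw a mS) (iw a mS0).
have gBE := integral_EFin_split (measurable_funB (mg true) (mg false))
  (integrableB_EFin mS (ig true) (ig false)) (integrableB_EFin mS0 (ig0 true) (ig0 false)).
rewrite PS0E; split; [move=> a; split | split].
- rewrite integral_y gE wE -!EFinM -!EFinB -!EFinD !lee_fin.
  have := bound_S1 a; have := bound_S0 a.
  by rewrite !ler_norml => /andP[? ?] /andP[? ?]; apply/andP; split; lra.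
- rewrite cond_mean_y !cond_mean_S0 ?iw // -!EFinM -!EFinB -!EFinD !lee_fin.
  set Qn := \int[P]_(t in S0) w a t.
  have e_p0 : d2 * p0 + d1 * Qn = (d1 * (Qn / p0) + d2) * p0.
    by field; rewrite gt_eqF.
  have := bound_S0 a; rewrite e_p0 => /(ler_dist_div p0_gt0).
  by move=> /andP[? ?]; apply/andP; split; lra.
- rewrite !integral_y gBE -!EFinM -!EFinB -!EFinD !lee_fin !RintegralB ?ig ?ig0 //.
  have hw := congr1 (fun x => d1 * x) PS1_add_p0.
  rewrite /= /p0 -(Rintegral_w_sum true mS) -(Rintegral_w_sum true mS0) in hw.
  rewrite !mulrDr mulr1 in hw.
  have := bound_S1 true; have := bound_S0 true.
  have := bound_S1 false; have := bound_S0 false.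
  rewrite !ler_norml => /andP[? ?] /andP[? ?] /andP[? ?] /andP[? ?].
  by apply/andP; split; lra.
- rewrite !cond_mean_y cond_mean_S0; last exact: integrableB_EFin.
  rewrite -!EFinB -!EFinD !lee_fin RintegralB ?ig0 //.
  have hw := congr1 (fun x => d1 * x) (Rintegral_w_sum true mS0).
  rewrite /= mulrDr -/p0 in hw.
  have : `|(\int[P]_(t in S0) n0 true t - \int[P]_(t in S0) n0 false t) -
           (\int[P]_(t in S0) g true t - \int[P]_(t in S0) g false t)|
         <= (d1 + 2 * d2) * p0.
    have := bound_S0 true; have := bound_S0 false.
    by rewrite !ler_norml => /andP[? ?] /andP[? ?]; apply/andP; split; lra.
  by move=> /(ler_dist_div p0_gt0); rewrite !mulrBl => /andP[? ?]; apply/andP; split; lra.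
Qed.

End selection_bounds.
Theorem theorem2 (R : realType) (d dX dV : measure_display)
  (T : measurableType d) (P : probability T R)
  (TX : measurableType dX) (TV : measurableType dV)
  (X : T -> TX) (proj : TX -> TV)
  (A S : T -> bool) (Y : T -> R) (Yp : bool -> T -> R)
  (pi mu : bool -> TX -> R) (rho : TV -> R) (tau : bool -> TV -> R)
  (q : bool -> TV -> R)
  (m : bool -> bool -> TX -> R) (n0 n1 : bool -> TV -> R)
  (d1 d2 : R) :
  let V := fun t => proj (X t) in
  measurable_fun setT X -> measurable_fun setT proj ->
  measurable [set t | A t] -> measurable [set t | S t] ->
  measurable_fun setT Y -> (forall a, measurable_fun setT (Yp a)) ->
  (forall a, P.-integrable setT (EFin \o Yp a)) ->
  (0 < P [set t | ~~ S t])%E ->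
  (* nuisance functions (versions of the conditional expectations) *)
  (forall a, cond_exp_on P [set t | S t] X (\1_[set t | A t = a]) (pi a)) ->
  cond_exp_on P setT V (\1_[set t | S t]) rho ->
  (forall a, cond_exp_on P [set t | A t = a /\ S t] X Y (mu a)) ->
  (forall a, cond_exp_on P [set t | S t] V (fun t => mu a (X t)) (tau a)) ->
  (* q a (V) = P(A = 1 - a | V, S = 1) *)
  (forall a, cond_exp_on P [set t | S t] V (\1_[set t | A t = ~~ a]) (q a)) ->
  (* m a a' (X) = E[Y^a | X, A = a', S = 1] *)
  (forall a a', cond_exp_on P [set t | A t = a' /\ S t] X (Yp a) (m a a')) ->
  (* n0 a (V) = E[Y^a | V, S = 0],  n1 a (V) = E[Y^a | V, S = 1] *)
  (forall a, cond_exp_on P [set t | ~~ S t] V (Yp a) (n0 a)) ->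
  (forall a, cond_exp_on P [set t | S t] V (Yp a) (n1 a)) ->
  (* (i) consistency *)
  (forall a, {ae P, forall t, A t = a -> Y t = Yp a t}) ->
  (* (ii) treatment positivity, a.s. under P( . | S = 1) *)
  (forall a, {ae P, forall t, S t -> 0 < pi a (X t)}) ->
  (* (iii) selection positivity *)
  {ae P, forall t, 0 < rho (V t)} ->
  (* (iv) *)
  0 < d1 ->
  (forall a, {ae P, forall t, S t -> `|m a true (X t) - m a false (X t)| <= d1}) ->
  (* (v) *)
  0 < d2 ->
  (forall a, {ae P, forall t, `|n0 a (V t) - n1 a (V t)| <= d2}) ->
  let psi a := (\int[P]_t (Yp a t)%:E)%E in
  let theta a := cond_mean P [set t | ~~ S t] (Yp a) in
  let PS0 := P [set t | ~~ S t] in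
  let Etau a := (\int[P]_t (tau a (V t))%:E)%E in
  let Eq a := (\int[P]_t (q a (V t))%:E)%E in
  let Etau0 a := cond_mean P [set t | ~~ S t] (fun t => tau a (V t)) in
  let Eq0 a := cond_mean P [set t | ~~ S t] (fun t => q a (V t)) in
  let Ediff := (\int[P]_t (tau true (V t) - tau false (V t))%:E)%E in
  let Ediff0 := cond_mean P [set t | ~~ S t]
                  (fun t => tau true (V t) - tau false (V t)) in
  (forall a : bool,
     (Etau a - d1%:E * Eq a - d2%:E * PS0 <= psi a <=
      Etau a + d1%:E * Eq a + d2%:E * PS0)%E /\
     (Etau0 a - d1%:E * Eq0 a - d2%:E <= theta a <=
      Etau0 a + d1%:E * Eq0 a + d2%:E)%E) /\
  (Ediff - d1%:E - (2 * d2)%:E * PS0 <= psi true - psi false <=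
   Ediff + d1%:E + (2 * d2)%:E * PS0)%E /\
  (Ediff0 - d1%:E - (2 * d2)%:E <= theta true - theta false <=
   Ediff0 + d1%:E + (2 * d2)%:E)%E.
Proof.
move=> V mX mproj mA mS mY mYp iYp PS0_gt0 hpi hrho hmu htau hq hm hn0 hn1
  consistency pi_gt0 rho_gt0 d1_gt0 hd1 d2_gt0 hd2.
have mV : measurable_fun setT V := measurableT_comp mproj mX.
have q_ge0 a := cond_prob_ge0_support mX mproj mS hrho rho_gt0 (hq a).
have q_sum a : {ae P, forall t, q a (V t) + q (~~ a) (V t) = 1}.
  have hqa := hq (~~ a); rewrite negbK in hqa.
  by apply: filterS (cond_prob_compl_support mX mproj mA mS hrho rho_gt0 (hq a) hqa).
have m_dist a : {ae P, forall t, S t -> `|m a a (X t) - m a (~~ a) (X t)| <= d1}.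
  by case: a (hd1 a) => // hd1a; apply: filterS hd1a => t + St; rewrite distrC; apply.
have n1_tau a := n1_tau_dist_le mX mproj mA mS hrho rho_gt0 (hq a) mY (mYp a)
  (iYp a) (hpi a) (hmu a) (htau a) (hm a a) (hm a (~~ a)) (hn1 a) (consistency a)
  (pi_gt0 a) (m_dist a).
exact: (selection_bounds (y := Yp) (n1 := fun a t => n1 a (V t))
  (n0 := fun a t => n0 a (V t)) (g := fun a t => tau a (V t))
  (w := fun a t => q a (V t)) mS PS0_gt0 (ltW d1_gt0) (ltW d2_gt0) mYp
  (fun a => measurableT_comp (htau a).1 mV) (fun a => measurableT_comp (hq a).1 mV)
  (fun a => (hn1 a).2.1) (fun a => (hn0 a).2.1) (fun a => (htau a).2.1)
  (fun a => cond_exp_on_integral (hn1 a)) (fun a => cond_exp_on_integral (hn0 a))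
  hd2 n1_tau q_ge0 q_sum).
Qed.
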